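(* Let $R$ be a commutative associative unital ring, $B$ an $R$-algebra, $\beta\in\mathrm{IBF}_R(B)$ and $S$ a commutative associative unital $R$-algebra. (a) Let $\nu\colon\mathbf{IBF}_R(B)\otimes_R S\to\mathbf{IBF}_S(B\otimes_R S)$ be the isomorphism $\overline{b_1\otimes b_2}\otimes s\mapsto s\,\overline{(b_1\otimes1)\otimes(b_2\otimes1)}$. Then, identifying $R\otimes_R S=S$, one has $(\bar\beta)_S=\overline{(\beta_S)}\circ\nu$. (b) Assume $B$ is finitely presented as an $R$-module and $S$ is flat over $R$. If $(B,\beta)$ satisfies the IBF-principle, then so does $(B\otimes_R S,\beta_S)$. The converse holds whenever $S$ is faithfully flat over $R$.
   Context: An $R$-algebra is an $R$-module with an $R$-bilinear product (no identities assumed). $\mathrm{IBF}_R(B)$ is the set of $R$-bilinear forms $\beta\colon B\times B\to R$ with $\beta(ab,c)=\beta(a,bc)=\beta(b,ca)$. $\mathbf{IBF}_R(B)$ is the quotient of $B\otimes_R B$ by the $R$-submodule spanned by all $ab\otimes c-a\otimes bc$ and $ab\otimes c-b\otimes ca$; $\overline{a\otimes b}$ is the class of $a\otimes b$. For $\beta\in\mathrm{IBF}_R(B)$, $\bar\beta\colon\mathbf{IBF}_R(B)\to R$ is the $R$-linear map $\overline{a\otimes b}\mapsto\beta(a,b)$, and $(\bar\beta)_S=\bar\beta\otimes\mathrm{Id}_S$. $\beta_S$ is the base change: the $S$-bilinear form on $B\otimes_R S$ with $\beta_S(a\otimes s,b\otimes s')=\beta(a,b)ss'$ (it is invariant), and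 $\overline{(\beta_S)}\colon\mathbf{IBF}_S(B\otimes_R S)\to S$ is its induced map. $(C,\gamma)$ satisfies the IBF-principle if $\bar\gamma$ is an isomorphism. *)

(* Tensor products and IBF-modules are given by explicit
   data characterised by their universal property / defining relations
   (they are unique up to unique isomorphism). *)
From HB Require Import structures.
From mathcomp Require Import all_boot all_order all_algebra.
Set Implicit Arguments. Unset Strict Implicit. Unset Printing Implicit Defensive.
Import GRing.Theory.
Local Open Scope ring_scope.

(* Restriction of scalars along a ring morphism phi : R -> S:
   an S-module T viewed as an R-module, r *: t := phi r *: t. *)
Definition restr (R S : pzRingType) (phi : {rmorphism R -> S})
  (T : lmodType S) : Type := T.
Section Restr.
Variables (R S : pzRingType) (phi : {rmorphism R -> S}) (T : lmodType S).
HB.instance Definition _ := GRing.Zmodule.on (restr phi T).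
Definition restr_scale (r : R) (t : restr phi T) : restr phi T := (phi r *: (t : T)).
Lemma restr_scaleA a b v :
  restr_scale a (restr_scale b v) = restr_scale (a * b) v.
Proof. by rewrite /restr_scale scalerA rmorphM. Qed.
Lemma restr_scale1 : left_id 1 restr_scale.
Proof. by move=> v; rewrite /restr_scale rmorph1 scale1r. Qed.
Lemma restr_scaleDr : right_distributive restr_scale +%R.
Proof. by move=> a u v; rewrite /restr_scale scalerDr. Qed.
Lemma restr_scaleDl v : {morph restr_scale^~ v : a b / a + b}.
Proof. by move=> a b; rewrite /restr_scale rmorphD scalerDl. Qed.
HB.instance Definition _ := GRing.Zmodule_isLmodule.Build R (restr phi T)
  restr_scaleA restr_scale1 restr_scaleDr restr_scaleDl.
End Restr.

Section Defs.
Variable K : comPzRingType.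

Definition bilin (M N V : lmodType K) (g : M -> N -> V) : Prop :=
  (forall m, linear (g m)) /\ (forall n, linear (g^~ n)).

Definition is_tensor_product (M N T : lmodType K) (t : M -> N -> T) : Prop :=
  bilin t /\
  forall (V : lmodType K) (g : M -> N -> V), bilin g ->
    (exists h : T -> V, linear h /\ forall m n, h (t m n) = g m n) /\
    (forall h1 h2 : T -> V, linear h1 -> linear h2 ->
       (forall m n, h1 (t m n) = h2 (t m n)) -> forall x, h1 x = h2 x).

Inductive span (V : lmodType K) (P : V -> Prop) : V -> Prop :=
  | span0 : span P 0
  | span_gen x : P x -> span P x
  | span_comb r x y : span P x -> span P y -> span P (r *: x + y).

Definition ibf_inv (C V : lmodType K) (mulC : C -> C -> C) (g : C -> C -> V) :=
  forall a b c, g (mulC a b) c = g a (mulC b c) /\ g (mulC a b) c = g b (mulC c a).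

Definition is_IBF_form (C : lmodType K) (mulC : C -> C -> C) (g : C -> C -> K^o) :=
  bilin g /\ ibf_inv mulC g.

(* (Q, q) is IBF_K(C) = (C (x)_K C) / span{ab(x)c - a(x)bc, ab(x)c - b(x)ca},
   where (TT, tt) is the tensor product C (x)_K C and q the quotient map
   (so the class of a (x) b is q (tt a b)). *)
Definition is_IBF_quot (C : lmodType K) (mulC : C -> C -> C)
    (TT : lmodType K) (tt : C -> C -> TT) (Q : lmodType K) (q : TT -> Q) :=
  is_tensor_product tt /\ linear q /\ (forall y, exists x, q x = y) /\
  forall x, q x = 0 <->
    span (fun z => exists a b c, z = tt (mulC a b) c - tt a (mulC b c) \/
                                 z = tt (mulC a b) c - tt b (mulC c a)) x.

Definition fin_pres (M : lmodType K) : Prop :=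
  exists n (p : 'rV[K]_n -> M), linear p /\ (forall y, exists x, p x = y) /\
    exists m (k : 'I_m -> 'rV[K]_n),
      forall x, p x = 0 <-> span (fun z => exists i, z = k i) x.

Definition flat (A : lmodType K) : Prop :=
  forall (M N : lmodType K) (f : M -> N), linear f -> injective f ->
  forall (TM : lmodType K) (tM : A -> M -> TM) (TN : lmodType K) (tN : A -> N -> TN),
    is_tensor_product tM -> is_tensor_product tN ->
  forall F : TM -> TN, linear F -> (forall a m, F (tM a m) = tN a (f m)) ->
    injective F.

Definition exact_at (M1 M2 M3 : lmodType K) (f : M1 -> M2) (g : M2 -> M3) :=
  forall y, g y = 0 <-> exists x, f x = y.

Definition faithfully_flat (A : lmodType K) : Prop :=
  forall (M1 M2 M3 : lmodType K) (f : M1 -> M2) (g : M2 -> M3),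
    linear f -> linear g ->
  forall (T1 T2 T3 : lmodType K) (t1 : A -> M1 -> T1) (t2 : A -> M2 -> T2)
         (t3 : A -> M3 -> T3),
    is_tensor_product t1 -> is_tensor_product t2 -> is_tensor_product t3 ->
  forall (F : T1 -> T2) (G : T2 -> T3), linear F -> linear G ->
    (forall a m, F (t1 a m) = t2 a (f m)) ->
    (forall a m, G (t2 a m) = t3 a (g m)) ->
    (exact_at f g <-> exact_at F G).

End Defs.

From Pilot Require Import Defs.
From HB Require Import structures.
From mathcomp Require Import all_boot all_order all_algebra.
From Stdlib Require Import ClassicalEpsilon FunctionalExtensionality.
From Stdlib Require Import PropExtensionality ProofIrrelevance.
Set Implicit Arguments. Unset Strict Implicit. Unset Printing Implicit Defensive.
Import GRing.Theory.
Local Open Scope ring_scope.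

(* Part (a) is checked on pure tensors.
   If [betabar] is bijective, IBF_R(B) is free of rank one on some [x0] with
   [betabar x0 = 1]; the image [e] of [x0] in IBF_S(B (x)_R S) satisfies
   [betaSbar e = 1] and generates, because every class of a tensor of pure tensors
   is an S-multiple of the image of an element of IBF_R(B). So [betaSbar] is
   bijective.
   Conversely, a finite presentation of B presents IBF_R(B) as the cokernel of a
   map of finite free modules [R^J -> R^(n*n)], on which [betabar] becomes a form
   [R^(n*n) -> R]. Reading the same generators and relations over S gives an
   invariant S-bilinear map out of B (x)_R S, hence a map out of
   IBF_S(B (x)_R S); bijectivity of [betaSbar] then says that
   [S^J -> S^(n*n) -> S -> 0] is exact. This sequence is the base change of
   [R^J -> R^(n*n) -> R -> 0], so by faithful flatness the latter is exact, which
   is bijectivity of [betabar]. *)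

Section LinearFacts.
Variables (K : pzRingType) (U V : lmodType K) (f : U -> V).
Hypothesis f_lin : linear f.

Lemma linD u v : f (u + v) = f u + f v.
Proof. by have := f_lin 1 u v; rewrite !scale1r. Qed.
Lemma lin0 : f 0 = 0.
Proof. by apply: (addrI (f 0)); rewrite -linD !addr0. Qed.
Lemma linZ a u : f (a *: u) = a *: f u.
Proof. by have := f_lin a u 0; rewrite !addr0 lin0 addr0. Qed.
Lemma linN u : f (- u) = - f u.
Proof. by rewrite -scaleN1r linZ scaleN1r. Qed.
Lemma linB u v : f (u - v) = f u - f v.
Proof. by rewrite linD linN. Qed.
Lemma lin_sum I r (P : pred I) (F : I -> U) :
  f (\sum_(i <- r | P i) F i) = \sum_(i <- r | P i) f (F i).
Proof. exact: (big_morph f linD lin0). Qed.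
End LinearFacts.

Section LinearClosure.
Variables (K : pzRingType) (U V W : lmodType K).

Lemma lin_zero : linear (fun _ : U => 0 : V).
Proof. by move=> a u v; rewrite scaler0 addr0. Qed.
Lemma lin_comp (f : U -> V) (g : V -> W) :
  linear f -> linear g -> linear (fun x => g (f x)).
Proof. by move=> Hf Hg a u v; rewrite Hf Hg. Qed.
Lemma lin_addf (f g : U -> V) : linear f -> linear g -> linear (fun x => f x + g x).
Proof. by move=> Hf Hg a u v; rewrite Hf Hg scalerDr addrACA. Qed.
Lemma lin_subf (f g : U -> V) : linear f -> linear g -> linear (fun x => f x - g x).
Proof. by move=> Hf Hg a u v; rewrite Hf Hg scalerBr opprD addrACA. Qed.
End LinearClosure.

Lemma scale_regularE (K : pzRingType) (a x : K) : a *: (x : K^o) = a * x.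
Proof. by []. Qed.

Lemma lin_scalev (K : comPzRingType) (U V : lmodType K) (f : U -> K^o) (v : V) :
  linear f -> linear (fun x => f x *: v).
Proof. by move=> Hf a u u'; rewrite Hf scalerDl scale_regularE scalerA. Qed.

Section Restriction.
Variables (R S : comPzRingType) (phi : {rmorphism R -> S}) (U V : lmodType S).

Lemma restr_scaleE (W : lmodType S) (a : R) (u : restr phi W) :
  a *: u = (phi a *: (u : W) : W).
Proof. by []. Qed.

Lemma lin_restr (f : U -> V) : linear f -> linear (f : restr phi U -> restr phi V).
Proof. by move=> Hf a; exact: (Hf (phi a)). Qed.

Lemma lin_restr_scaler (s : S) : linear (fun u : restr phi U => s *: (u : U) : restr phi U).
Proof. by move=> a u v; rewrite !restr_scaleE scalerDr !scalerA mulrC. Qed.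

Lemma lin_restr_scalel (u : U) : linear (fun s : restr phi S^o => (s : S) *: u : restr phi U).
Proof. by move=> a s s'; rewrite !restr_scaleE scale_regularE scalerDl scalerA. Qed.

Lemma lin_rmorph_restr : linear (phi : R^o -> restr phi S^o).
Proof. by move=> a u v; rewrite restr_scaleE scale_regularE /= scale_regularE rmorphD rmorphM. Qed.
End Restriction.

Section Generation.
Variable K : comPzRingType.

Definition generates (M : lmodType K) (P : M -> Prop) :=
  forall (V : lmodType K) (h : M -> V), linear h -> (forall x, P x -> h x = 0) ->
  forall x, h x = 0.

Definition trilin (M V : lmodType K) (f : M -> M -> M -> V) :=
  (forall x, bilin (f x)) /\ (forall y z, linear (fun x => f x y z)).

Variables (M V : lmodType K) (P : M -> Prop).
Hypothesis genP : generates P.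

Lemma generates_ext (h1 h2 : M -> V) : linear h1 -> linear h2 ->
  (forall x, P x -> h1 x = h2 x) -> forall x, h1 x = h2 x.
Proof.
move=> L1 L2 E x; apply/eqP; rewrite -subr_eq0; apply/eqP; move: x.
by apply: (genP (lin_subf L1 L2)) => x Px; rewrite E ?subrr.
Qed.

Lemma generates_ext2 (f g : M -> M -> V) : bilin f -> bilin g ->
  (forall x y, P x -> P y -> f x y = g x y) -> forall x y, f x y = g x y.
Proof.
move=> [Lf1 Lf2] [Lg1 Lg2] E x y; move: x.
apply: (generates_ext (Lf2 y) (Lg2 y)) => x Px.
by apply: (generates_ext (Lf1 x) (Lg1 x)) => y' Py; apply: E.
Qed.

Lemma generates_ext3 (f g : M -> M -> M -> V) : trilin f -> trilin g ->
  (forall x y z, P x -> P y -> P z -> f x y z = g x y z) ->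
  forall x y z, f x y z = g x y z.
Proof.
move=> [Lf1 Lf2] [Lg1 Lg2] E x y z; move: x.
apply: (generates_ext (Lf2 y z) (Lg2 y z)) => x Px.
by apply: (generates_ext2 (Lf1 x) (Lg1 x)) => y' z' Py Pz; apply: E.
Qed.

Lemma ibf_inv_generated (mul : M -> M -> M) (g : M -> M -> V) :
  bilin mul -> bilin g ->
  (forall x y z, P x -> P y -> P z ->
     g (mul x y) z = g x (mul y z) /\ g (mul x y) z = g y (mul z x)) ->
  ibf_inv mul g.
Proof.
move=> [mul1 mul2] [g1 g2] E x y z.
have lhs : trilin (fun x y z => g (mul x y) z).
  split=> [x'|y' z']; last exact: lin_comp (mul2 y') (g2 z').
  by split=> [y'|z']; [exact: g1 | exact: lin_comp (mul1 x') (g2 z')].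
have rhs1 : trilin (fun x y z => g x (mul y z)).
  split=> [x'|y' z']; last exact: g2.
  by split=> [y'|z']; [exact: lin_comp (mul1 y') (g1 x') | exact: lin_comp (mul2 z') (g1 x')].
have rhs2 : trilin (fun x y z => g y (mul z x)).
  split=> [x'|y' z']; last exact: lin_comp (mul1 z') (g1 y').
  by split=> [y'|z']; [exact: lin_comp (mul2 x') (g1 y') | exact: g2].
split; move: x y z.
  by apply: (generates_ext3 lhs rhs1) => x y z Px Py Pz; case: (E x y z Px Py Pz).
by apply: (generates_ext3 lhs rhs2) => x y z Px Py Pz; case: (E x y z Px Py Pz).
Qed.
End Generation.

Lemma span_ind (K : comPzRingType) (V W : lmodType K) (P : V -> Prop) (h : V -> W) :
  linear h -> (forall x, P x -> h x = 0) -> forall x, Defs.span P x -> h x = 0.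
Proof.
move=> Hh HP x; elim=> [|y /HP //|r y z _ Hy _ Hz]; first exact: lin0.
by rewrite Hh Hy Hz scaler0 addr0.
Qed.

Section TensorProduct.
Variables (K : comPzRingType) (M N T : lmodType K) (t : M -> N -> T).
Hypothesis tP : is_tensor_product t.

Lemma tensor_generates : generates (fun x => exists m n, x = t m n).
Proof.
move=> V h Lh H0 x.
have bilin0 : bilin (fun (_ : M) (_ : N) => 0 : V) by split=> ?; exact: (@lin_zero _ _ _).
have := (tP.2 V _ bilin0).2 h _ Lh (@lin_zero _ _ _) _ x; apply.
by move=> m n; apply: H0; exists m, n.
Qed.

Lemma tensor_ext (V : lmodType K) (h1 h2 : T -> V) : linear h1 -> linear h2 ->
  (forall m n, h1 (t m n) = h2 (t m n)) -> forall x, h1 x = h2 x.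
Proof.
move=> L1 L2 E; apply: (generates_ext tensor_generates L1 L2).
by move=> _ [m [n ->]].
Qed.

Lemma tensor_lift (V : lmodType K) (g : M -> N -> V) : bilin g ->
  {h : T -> V | linear h /\ forall m n, h (t m n) = g m n}.
Proof. by move=> Hg; apply: constructive_indefinite_description; exact: (tP.2 V g Hg).1. Qed.
End TensorProduct.

Record submod (K : pzRingType) (V : lmodType K) := Submod {
  submod_mem :> V -> Prop;
  submod0 : submod_mem 0;
  submod_comb : forall r x y, submod_mem x -> submod_mem y -> submod_mem (r *: x + y) }.

Section Quotient.
Variables (K : pzRingType) (V : lmodType K) (W : submod V).

Let memD x y : W x -> W y -> W (x + y).
Proof. by move=> Wx Wy; rewrite -[x]scale1r; apply: submod_comb. Qed.
Let memZ r x : W x -> W (r *: x).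
Proof. by move=> Wx; rewrite -[_ *: _]addr0; apply: submod_comb (submod0 W). Qed.
Let memN x : W x -> W (- x).
Proof. by move=> Wx; rewrite -scaleN1r; apply: memZ. Qed.

(* Each coset of [W] is represented by a chosen element, so that the quotient
   is a subtype of [V]. *)
Definition canon (x : V) : V := epsilon (inhabits x) (fun y => W (y - x)).

Lemma canon_spec x : W (canon x - x).
Proof.
apply: (epsilon_spec (inhabits x) (fun y => W (y - x))).
by exists x; rewrite subrr; apply: submod0.
Qed.

Lemma canon_eq x y : W (x - y) -> canon x = canon y.
Proof.
move=> Wxy; rewrite /canon (proof_irrelevance _ (inhabits x) (inhabits y)).
congr epsilon; apply: functional_extensionality => z.
apply: propositional_extensionality; split=> Wz.
  by have := memD Wz Wxy; rewrite addrA subrK.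
by have := memD Wz (memN Wxy); rewrite opprB addrA subrK.
Qed.

Lemma canon_eqW x y : canon x = canon y -> W (x - y).
Proof.
move=> E; have := memD (memN (canon_spec x)) (canon_spec y).
by rewrite E opprB addrA subrK.
Qed.

Lemma canon_idem x : canon (canon x) = canon x.
Proof. exact/canon_eq/canon_spec. Qed.

Definition quot : Type := {x : V | canon x == x}.
HB.instance Definition _ := Choice.on quot.

Definition quotpi (x : V) : quot := exist _ (canon x) (introT eqP (canon_idem x)).
Definition quot_repr (q : quot) : V := sval q.

Lemma quot_reprK q : quotpi (quot_repr q) = q.
Proof. by case: q => x Hx; apply/val_inj => /=; apply/eqP. Qed.

Lemma quot_reprP x : W (quot_repr (quotpi x) - x).
Proof. exact: canon_spec. Qed.

Lemma quotpiP x y : quotpi x = quotpi y <-> W (x - y).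
Proof.
split=> [E|Wxy]; first by apply: canon_eqW; have := congr1 sval E.
by apply/val_inj; rewrite /= (canon_eq Wxy).
Qed.

Lemma quotpi_addl x y : quotpi (quot_repr (quotpi x) + y) = quotpi (x + y).
Proof. by apply/quotpiP; rewrite opprD addrACA subrr addr0; apply: quot_reprP. Qed.
Lemma quotpi_addr x y : quotpi (x + quot_repr (quotpi y)) = quotpi (x + y).
Proof. by rewrite addrC quotpi_addl addrC. Qed.
Lemma quotpi_scale r x : quotpi (r *: quot_repr (quotpi x)) = quotpi (r *: x).
Proof. by apply/quotpiP; rewrite -scalerBr; apply/memZ/quot_reprP. Qed.

Definition quot_add (a b : quot) := quotpi (quot_repr a + quot_repr b).
Definition quot_opp (a : quot) := quotpi (- quot_repr a).
Definition quot_zero := quotpi 0.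
Definition quot_scale r (a : quot) := quotpi (r *: quot_repr a).

Lemma quot_addA : associative quot_add.
Proof. by move=> a b c; rewrite /quot_add quotpi_addl quotpi_addr addrA. Qed.
Lemma quot_addC : commutative quot_add.
Proof. by move=> a b; rewrite /quot_add addrC. Qed.
Lemma quot_add0 : left_id quot_zero quot_add.
Proof. by move=> a; rewrite /quot_add /quot_zero quotpi_addl add0r quot_reprK. Qed.
Lemma quot_addN : left_inverse quot_zero quot_opp quot_add.
Proof. by move=> a; rewrite /quot_add /quot_opp quotpi_addl addNr. Qed.
HB.instance Definition _ :=
  GRing.isZmodule.Build quot quot_addA quot_addC quot_add0 quot_addN.

Lemma quot_scaleA a b v : quot_scale a (quot_scale b v) = quot_scale (a * b) v.
Proof. by rewrite /quot_scale quotpi_scale scalerA. Qed.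
Lemma quot_scale1 : left_id 1 quot_scale.
Proof. by move=> v; rewrite /quot_scale scale1r quot_reprK. Qed.
Lemma quot_scaleDr : right_distributive quot_scale quot_add.
Proof.
by move=> a u v; rewrite /quot_scale /quot_add quotpi_scale quotpi_addl quotpi_addr scalerDr.
Qed.
Lemma quot_scaleDl v : {morph quot_scale^~ v : a b / a + b >-> quot_add a b}.
Proof. by move=> a b; rewrite /quot_scale /quot_add quotpi_addl quotpi_addr scalerDl. Qed.
HB.instance Definition _ := GRing.Zmodule_isLmodule.Build K quot
  quot_scaleA quot_scale1 quot_scaleDr quot_scaleDl.

Lemma quotpi_lin : linear quotpi.
Proof.
move=> r x y; rewrite -[RHS]/(quot_add (quot_scale r (quotpi x)) (quotpi y)).
rewrite /quot_scale /quot_add quotpi_addr; symmetry; rewrite quotpi_addl; apply/quotpiP.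
have := memZ r (quot_reprP x).
by rewrite scalerBr opprD addrACA subrr addr0.
Qed.

Lemma quotpi_eq0 x : quotpi x = 0 <-> W x.
Proof. by rewrite -[0 : quot]/quot_zero /quot_zero quotpiP subr0. Qed.
End Quotient.

Definition ffun_delta (K : pzRingType) (I : finType) (i : I) : {ffun I -> K^o} :=
  [ffun j => (i == j)%:R].

Lemma ffun_delta_sum (K : pzRingType) (I : finType) (x : {ffun I -> K^o}) :
  \sum_i x i *: ffun_delta K i = x.
Proof.
apply/ffunP => j; rewrite sum_ffunE (bigD1 j) //= big1 ?addr0.
  by rewrite ffunE ffunE eqxx scale_regularE mulr1.
by move=> i /negbTE ij; rewrite ffunE ffunE ij scale_regularE mulr0.
Qed.

Section FfunTensor.
Variables (R S : comPzRingType) (phi : {rmorphism R -> S}) (I : finType).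

(* [S^I] is [S (x)_R R^I]. *)
Definition ffun_tens (s : restr phi S^o) (x : {ffun I -> R^o}) : restr phi {ffun I -> S^o} :=
  [ffun i => (s : S) * phi (x i)].

Lemma ffun_tens_sum (v : restr phi {ffun I -> S^o}) :
  \sum_i ffun_tens (v i) (ffun_delta R i) = v.
Proof.
apply/ffunP => j; rewrite sum_ffunE (bigD1 j) //= big1 ?addr0.
  by rewrite !ffunE eqxx rmorph1 mulr1.
by move=> i /negbTE ij; rewrite !ffunE ij rmorph0 mulr0.
Qed.

Lemma ffun_tensor : is_tensor_product ffun_tens.
Proof.
split.
  split=> [s|x] r u v; apply/ffunP => i; rewrite /ffun_tens !ffunE.
    by rewrite !scale_regularE rmorphD rmorphM mulrDr mulrCA.
  by rewrite !scale_regularE (restr_scaleE r u) scale_regularE mulrDl mulrA.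
move=> V g [Hg1 Hg2]; split.
  exists (fun v : restr phi {ffun I -> S^o} => \sum_i g (v i) (ffun_delta R i)); split.
    move=> r u v; rewrite scaler_sumr -big_split /=; apply: eq_bigr => i _.
    have -> : (r *: u + v) i = r *: (u i : restr phi S^o) + v i.
      by rewrite ffunE restr_scaleE ffunE.
    by rewrite Hg2.
  move=> s x; rewrite -{2}(ffun_delta_sum x) (lin_sum (Hg1 s)); apply: eq_bigr => i _.
  rewrite (linZ (Hg1 s)) -(linZ (Hg2 _)) /ffun_tens ffunE; congr g.
  by rewrite restr_scaleE scale_regularE mulrC.
move=> h1 h2 L1 L2 E v; rewrite -(ffun_tens_sum v) (lin_sum L1) (lin_sum L2).
by apply: eq_bigr => i _; rewrite E.
Qed.
End FfunTensor.

Lemma bilin_restr (R S : comPzRingType) (phi : {rmorphism R -> S}) (M N V : lmodType S)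
  (g : M -> N -> V) : bilin g -> @bilin R (restr phi M) (restr phi N) (restr phi V) g.
Proof. by move=> [g1 g2]; split=> x; apply: lin_restr. Qed.

Section BilinBaseChange.
Variables (R S : comPzRingType) (phi : {rmorphism R -> S}) (B : lmodType R).
Variables (T : lmodType S) (tau : B -> restr phi S^o -> restr phi T).
Hypothesis tauP : is_tensor_product tau.
Hypothesis tau_scale : forall (s : S) b (s' : S), s *: (tau b s' : T) = tau b (s * s').
Variables (Q : lmodType S) (om : B -> B -> restr phi Q).
Hypothesis om_bil : bilin om.

(* The S-bilinear extension [omS] of [om], with
   [omS (tau a s) (tau b s') = s s' om a b], is lifted one tensor factor at a time. *)
Lemma om_tau1_bilin a :
  bilin (fun b (s : restr phi S^o) => (s : S) *: (om a b : Q) : restr phi Q).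
Proof.
split=> [b|s]; first exact: lin_restr_scalel.
exact: (lin_comp (om_bil.1 a) (lin_restr_scaler (phi:=phi) s)).
Qed.

Definition om_tau1 a : T -> Q := sval (tensor_lift tauP (om_tau1_bilin a)).

Lemma om_tau1_lin a : linear (om_tau1 a : restr phi T -> restr phi Q).
Proof. exact: (svalP (tensor_lift tauP (om_tau1_bilin a))).1. Qed.

Lemma om_tau1_tau a b s : om_tau1 a (tau b s) = (s : S) *: (om a b : Q).
Proof. exact: (svalP (tensor_lift tauP (om_tau1_bilin a))).2. Qed.

Lemma om_tau1_linl y : linear (fun a => om_tau1 a y : restr phi Q).
Proof.
move=> r a a'; move: y; apply: (tensor_ext tauP (om_tau1_lin _)).
  exact: lin_addf (lin_comp (om_tau1_lin a) (lin_restr_scaler (phi:=phi) (phi r))) (om_tau1_lin a').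
by move=> b s; rewrite !om_tau1_tau (om_bil.2 b) !restr_scaleE scalerDr !scalerA mulrC.
Qed.

Lemma om_tau1Z a (s : S) y : om_tau1 a (s *: y) = s *: om_tau1 a y.
Proof.
move: y; apply: (tensor_ext tauP
  (h1 := fun y : restr phi T => om_tau1 a (s *: (y : T)) : restr phi Q)
  (h2 := fun y : restr phi T => s *: om_tau1 a y : restr phi Q)).
- exact: lin_comp (lin_restr_scaler (phi:=phi) s) (om_tau1_lin a).
- exact: lin_comp (om_tau1_lin a) (lin_restr_scaler (phi:=phi) s).
by move=> b s'; rewrite tau_scale !om_tau1_tau scalerA.
Qed.

Lemma omS_bilin1 y :
  bilin (fun a (s : restr phi S^o) => (s : S) *: om_tau1 a y : restr phi Q).
Proof.
split=> [a|s]; first exact: lin_restr_scalel.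
exact: lin_comp (om_tau1_linl y) (lin_restr_scaler (phi:=phi) s).
Qed.

Definition omS (x y : T) : Q := sval (tensor_lift tauP (omS_bilin1 y)) x.

Lemma omS_linl y : linear (fun x : restr phi T => omS x y : restr phi Q).
Proof. exact: (svalP (tensor_lift tauP (omS_bilin1 y))).1. Qed.

Lemma omS_tau a s y : omS (tau a s) y = (s : S) *: om_tau1 a y.
Proof. exact: (svalP (tensor_lift tauP (omS_bilin1 y))).2. Qed.

Lemma omS_tau2 a s b s' : omS (tau a s) (tau b s') = (s : S) *: ((s' : S) *: (om a b : Q)).
Proof. by rewrite omS_tau om_tau1_tau. Qed.

Let omS_ext (h1 h2 : restr phi T -> restr phi Q) : linear h1 -> linear h2 ->
  (forall a s, h1 (tau a s) = h2 (tau a s)) -> forall x, h1 x = h2 x.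
Proof. by move=> L1 L2 E; apply: (tensor_ext tauP L1 L2) => a s; apply: E. Qed.

Lemma omSZl (s : S) x y : omS (s *: x) y = s *: omS x y.
Proof.
move: x; apply: omS_ext => [||a s'].
- exact: lin_comp (lin_restr_scaler (phi:=phi) s) (omS_linl y).
- exact: lin_comp (omS_linl y) (lin_restr_scaler (phi:=phi) s).
by rewrite tau_scale !omS_tau scalerA.
Qed.

Lemma omSZr (s : S) x y : omS x (s *: y) = s *: omS x y.
Proof.
move: x; apply: omS_ext => [||a s']; first exact: omS_linl.
  exact: lin_comp (omS_linl y) (lin_restr_scaler (phi:=phi) s).
by rewrite !omS_tau om_tau1Z !scalerA mulrC.
Qed.

Lemma omSDr x y y' : omS x (y + y') = omS x y + omS x y'.
Proof.
move: x; apply: omS_ext => [||a s]; first exact: omS_linl.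
  exact: lin_addf (omS_linl y) (omS_linl y').
by rewrite !omS_tau (linD (om_tau1_lin a)) scalerDr.
Qed.

Lemma omS_bilin : bilin omS.
Proof.
split=> [x|y] r u v; first by rewrite omSDr omSZr.
by rewrite (linD (omS_linl y)) omSZl.
Qed.

Variables (mulB : B -> B -> B) (mulT : T -> T -> T).
Hypothesis mulT_bil : bilin mulT.
Hypothesis mulT_tau : forall a (s : S) b (s' : S),
  mulT (tau a s) (tau b s') = tau (mulB a b) (s * s').

Lemma omS_ibf_inv : ibf_inv mulB om -> ibf_inv mulT omS.
Proof.
move=> om_inv; apply: (ibf_inv_generated (tensor_generates tauP) (bilin_restr phi mulT_bil)
  (bilin_restr phi omS_bilin)) => _ _ _ [a [s ->]] [b [s' ->]] [c [s'' ->]].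
have [E1 E2] := om_inv a b c; rewrite !mulT_tau !omS_tau2 !scalerA.
by split; [rewrite E1 mulrA | rewrite E2 [s'' * s]mulrC mulrA [s' * s]mulrC].
Qed.

End BilinBaseChange.

Section RankOneForm.
Variables (K : comPzRingType) (Q : lmodType K) (f : Q -> K^o).
Hypothesis f_lin : linear f.

Lemma bijective_form : bijective f -> exists e, f e = 1 /\ forall u, u = f u *: e.
Proof.
case=> g fK gK; exists (g 1); split=> [|u]; first exact: gK.
by apply: (can_inj fK); rewrite (linZ f_lin) gK scale_regularE mulr1.
Qed.

Lemma form_bijective e : f e = 1 -> (forall u, u = f u *: e) -> bijective f.
Proof.
move=> fe1 fE; exists (fun r : K^o => r *: e) => [u|r]; first by rewrite -fE.
by rewrite (linZ f_lin) fe1 scale_regularE mulr1.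
Qed.
End RankOneForm.

Section BaseChange.
Variables (R : comPzRingType) (B : lmodType R) (mulB : B -> B -> B).
Hypothesis mulB_bil : bilin mulB.
Variables (beta : B -> B -> R^o) (S : comPzRingType) (phi : {rmorphism R -> S}).
Variables (TTB : lmodType R) (ttB : B -> B -> TTB) (QB : lmodType R) (qB : TTB -> QB).
Hypothesis qBP : is_IBF_quot mulB ttB qB.
Variable betabar : QB -> R^o.
Hypothesis betabar_lin : linear betabar.
Hypothesis betabarE : forall a b, betabar (qB (ttB a b)) = beta a b.
Variables (T : lmodType S) (tau : B -> restr phi S^o -> restr phi T).
Hypothesis tauP : is_tensor_product tau.
Hypothesis tau_scale : forall (s : S) b (s' : S), s *: (tau b s' : T) = tau b (s * s').
Variable mulT : T -> T -> T.
Hypothesis mulT_bil : bilin mulT.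
Hypothesis mulT_tau : forall a (s : S) b (s' : S),
  mulT (tau a s) (tau b s') = tau (mulB a b) (s * s').
Variable betaS : T -> T -> S^o.
Hypothesis betaS_bil : bilin betaS.
Hypothesis betaS_tau : forall a (s : S) b (s' : S),
  betaS (tau a s) (tau b s') = phi (beta a b) * s * s'.
Variables (TTT : lmodType S) (ttT : T -> T -> TTT) (QT : lmodType S) (qT : TTT -> QT).
Hypothesis qTP : is_IBF_quot mulT ttT qT.
Variable betaSbar : QT -> S^o.
Hypothesis betaSbar_lin : linear betaSbar.
Hypothesis betaSbarE : forall x y, betaSbar (qT (ttT x y)) = betaS x y.

Lemma base_change_betabar (P : lmodType R) (pi : QB -> restr phi S^o -> P) :
  is_tensor_product pi ->
  forall betabar_S : P -> restr phi S^o, linear betabar_S ->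
  (forall x (s : S), betabar_S (pi x s) = betabar x *: (s : restr phi S^o)) ->
  forall nu : P -> restr phi QT, linear nu ->
  (forall b1 b2 (s : S),
     nu (pi (qB (ttB b1 b2)) s) = s *: (qT (ttT (tau b1 1) (tau b2 1)) : QT)) ->
  forall p : P, (betabar_S p : S) = (betaSbar (nu p) : S).
Proof.
move=> piP bS bS_lin bSE nu nu_lin nuE.
have betaSbar_nu := lin_comp nu_lin (lin_restr betaSbar_lin).
apply: (tensor_ext piP bS_lin betaSbar_nu) => x s.
have [qB_lin [qB_surj _]] := qBP.2; have [y <-] := qB_surj x.
have pi_lin := lin_comp qB_lin (piP.1.2 s).
move: y; apply: (tensor_ext qBP.1 (lin_comp pi_lin bS_lin) (lin_comp pi_lin betaSbar_nu)).
move=> a b /=; rewrite bSE nuE betabarE linZ // betaSbarE betaS_tau.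
by rewrite restr_scaleE !scale_regularE !mulr1 mulrC.
Qed.

Let qB_lin := qBP.2.1.
Let qT_lin := qTP.2.1.
Let ttT_bil := qTP.1.1.

Definition ibfS_tens1 (a b : B) : restr phi QT := qT (ttT (tau a 1) (tau b 1)).

Lemma ibfS_tens1_bilin : bilin ibfS_tens1.
Proof.
have [[tau1 tau2] _] := tauP; have [ttT1 ttT2] := bilin_restr phi ttT_bil.
split=> [a|b]; apply: lin_comp (lin_restr qT_lin).
  exact: lin_comp (tau2 1) (ttT1 _).
exact: lin_comp (tau2 1) (ttT2 _).
Qed.

Definition ibf_to_S : TTB -> restr phi QT := sval (tensor_lift qBP.1 ibfS_tens1_bilin).

Lemma ibf_to_S_lin : linear ibf_to_S.
Proof. exact: (svalP (tensor_lift qBP.1 ibfS_tens1_bilin)).1. Qed.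

Lemma ibf_to_S_tt a b : ibf_to_S (ttB a b) = qT (ttT (tau a 1) (tau b 1)).
Proof. exact: (svalP (tensor_lift qBP.1 ibfS_tens1_bilin)).2. Qed.

Lemma ibf_to_S_ker y : qB y = 0 -> ibf_to_S y = 0.
Proof.
have tau_mul a b : tau (mulB a b) 1 = mulT (tau a 1) (tau b 1) by rewrite mulT_tau mulr1.
move/qBP.2.2.2; apply: (span_ind ibf_to_S_lin) => _ [a [b [c [->|->]]]].
all: rewrite (linB ibf_to_S_lin) !ibf_to_S_tt !tau_mul -(linB qT_lin); apply/qTP.2.2.2.
all: apply: Defs.span_gen; exists (tau a 1), (tau b 1), (tau c 1); by [left|right].
Qed.

Lemma betaSbar_ibf_to_S y : betaSbar (ibf_to_S y) = phi (betabar (qB y)).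
Proof.
move: y; apply: (tensor_ext qBP.1 (V := restr phi S^o)).
- exact: lin_comp ibf_to_S_lin (lin_restr betaSbar_lin).
- exact: lin_comp qB_lin (lin_comp betabar_lin (lin_rmorph_restr phi)).
by move=> a b; rewrite ibf_to_S_tt betaSbarE betaS_tau betabarE !mulr1.
Qed.

Lemma qT_tau a s b s' :
  qT (ttT (tau a s) (tau b s')) = (s * s') *: (ibf_to_S (ttB a b) : QT).
Proof.
rewrite ibf_to_S_tt -[s]mulr1 -[s']mulr1 -!tau_scale.
by rewrite (linZ (ttT_bil.2 _)) (linZ (ttT_bil.1 _)) !(linZ qT_lin) scalerA !mulr1 mulrC.
Qed.

Lemma qT_rank_one (e : QT) :
  (forall a b, ibf_to_S (ttB a b) = phi (beta a b) *: e) ->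
  forall z, qT z = betaSbar (qT z) *: e.
Proof.
move=> ttBE; apply: (tensor_ext qTP.1 qT_lin (lin_scalev _ (lin_comp qT_lin betaSbar_lin))).
have [bS1 bS2] := bilin_restr phi betaS_bil; have [ttT1 ttT2] := bilin_restr phi ttT_bil.
apply: (generates_ext2 (tensor_generates tauP) (V := restr phi QT)).
- by split=> [x|y]; apply: lin_comp (lin_restr qT_lin); [exact: ttT1|exact: ttT2].
- split=> [x|y]; apply/lin_restr/lin_scalev/(lin_comp _ (lin_comp qT_lin betaSbar_lin)).
    exact: ttT_bil.1.
  exact: ttT_bil.2.
move=> _ _ [a [s ->]] [b [s' ->]].
by rewrite betaSbarE betaS_tau qT_tau ttBE scalerA mulrC mulrA.
Qed.

Lemma ibf_principle_base_change : bijective betabar -> bijective betaSbar.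
Proof.
move=> /(bijective_form betabar_lin) [x0 [x0_1 x0E]].
have [y0 y0E] := qBP.2.2.1 x0.
set e : QT := ibf_to_S y0.
apply: (form_bijective betaSbar_lin (e := e)) => [|u].
  by rewrite betaSbar_ibf_to_S y0E x0_1 rmorph1.
have [z <-] := qTP.2.2.1 u; apply: qT_rank_one => a b.
apply/eqP; rewrite -restr_scaleE -(linZ ibf_to_S_lin) -subr_eq0 -(linB ibf_to_S_lin).
apply/eqP/ibf_to_S_ker.
by rewrite (linB qB_lin) (linZ qB_lin) y0E -betabarE -x0E subrr.
Qed.

Section Descent.
Variables (n : nat) (pr : 'rV[R]_n -> B).
Hypothesis pr_lin : linear pr.
Hypothesis pr_surj : forall b, exists u, pr u = b.
Variables (m : nat) (pr_rel : 'I_m -> 'rV[R]_n).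
Hypothesis pr_ker : forall u, pr u = 0 <-> Defs.span (fun z => exists i, z = pr_rel i) u.

Definition lift_row (b : B) : 'rV[R]_n :=
  sval (constructive_indefinite_description _ (pr_surj b)).

Lemma lift_rowK b : pr (lift_row b) = b.
Proof. exact: svalP (constructive_indefinite_description _ (pr_surj b)). Qed.

Definition bgen (i : 'I_n) : B := pr (delta_mx 0 i).

Lemma pr_expand u : pr u = \sum_i u 0 i *: bgen i.
Proof.
by rewrite {1}(row_sum_delta u) (lin_sum pr_lin); apply: eq_bigr => i _; rewrite (linZ pr_lin).
Qed.

Lemma row_generates : generates (fun u : 'rV[R]_n => exists i, u = delta_mx 0 i).
Proof.
move=> V h h_lin h0 u; rewrite (row_sum_delta u) (lin_sum h_lin) big1 // => i _.
by rewrite (linZ h_lin) h0 ?scaler0 //; exists i.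
Qed.

Lemma bgen_generates : generates (fun b => exists i, b = bgen i).
Proof.
move=> V h h_lin h0 b; rewrite -(lift_rowK b).
apply: (row_generates (lin_comp pr_lin h_lin)) => _ [i ->].
by apply: h0; exists i.
Qed.

Local Notation Pairs := ('I_n * 'I_n)%type.

Definition outer (u v : 'rV[R]_n) : {ffun Pairs -> R^o} := [ffun ij => u 0 ij.1 * v 0 ij.2].

Lemma outer_bilin : bilin outer.
Proof.
split=> [u|v] r w w'; apply/ffunP => ij; rewrite !ffunE !mxE scale_regularE.
  by rewrite mulrDr mulrCA.
by rewrite mulrDl mulrA.
Qed.

Definition mult_row i j := lift_row (mulB (bgen i) (bgen j)).

(* Generators of the relations of B (x) B, then of the invariance relations
   between the basis tensors [bgen i (x) bgen j]. *)
Local Notation RelIdx :=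
  (('I_m * 'I_n + 'I_n * 'I_m) + ('I_n * 'I_n * 'I_n + 'I_n * 'I_n * 'I_n))%type.

Definition ibf_rel (g : RelIdx) : {ffun Pairs -> R^o} :=
  match g with
  | inl (inl (i, j)) => outer (pr_rel i) (delta_mx 0 j)
  | inl (inr (i, j)) => outer (delta_mx 0 i) (pr_rel j)
  | inr (inl (i, j, l)) =>
      outer (mult_row i j) (delta_mx 0 l) - outer (delta_mx 0 i) (mult_row j l)
  | inr (inr (i, j, l)) =>
      outer (mult_row i j) (delta_mx 0 l) - outer (delta_mx 0 j) (mult_row l i)
  end.

Definition tens (Y : {ffun Pairs -> R^o}) : TTB := \sum_ij Y ij *: ttB (bgen ij.1) (bgen ij.2).

Lemma tens_lin : linear tens.
Proof.
move=> r Y Y'; rewrite /tens scaler_sumr -big_split; apply: eq_bigr => ij _.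
by rewrite !ffunE scale_regularE scalerDl scalerA.
Qed.

Lemma tens_outer u v : tens (outer u v) = ttB (pr u) (pr v).
Proof.
have [[tt1 tt2] _] := qBP.1.
pose F i j := outer u v (i, j) *: ttB (bgen i) (bgen j).
rewrite /tens (eq_bigr (fun ij => F ij.1 ij.2)); last by case.
rewrite -(pair_bigA _ F) /=.
rewrite (pr_expand u) (lin_sum (tt2 _)); apply: eq_bigr => i _.
rewrite (linZ (tt2 _)) (pr_expand v) (lin_sum (tt1 _)) scaler_sumr; apply: eq_bigr => j _.
by rewrite (linZ (tt1 _)) scalerA /F ffunE.
Qed.

Lemma pr_rel0 i : pr (pr_rel i) = 0.
Proof. by apply/pr_ker/Defs.span_gen; exists i. Qed.

Lemma qB_tens_rel g : qB (tens (ibf_rel g)) = 0.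
Proof.
have [[[tt1 tt2] _] [_ [_ qB_ker]]] := qBP.
case: g => [[[i j]|[i j]]|[[[i j] l]|[[i j] l]]] /=; rewrite ?(linB tens_lin) !tens_outer.
- by rewrite pr_rel0 (lin0 (tt2 _)) (lin0 qB_lin).
- by rewrite pr_rel0 (lin0 (tt1 _)) (lin0 qB_lin).
- apply/qB_ker/Defs.span_gen; exists (bgen i), (bgen j), (bgen l); left.
  by rewrite /mult_row !lift_rowK.
- apply/qB_ker/Defs.span_gen; exists (bgen i), (bgen j), (bgen l); right.
  by rewrite /mult_row !lift_rowK.
Qed.

Definition bform (Y : {ffun Pairs -> R^o}) : R^o := \sum_ij Y ij * beta (bgen ij.1) (bgen ij.2).

Lemma bformE Y : bform Y = betabar (qB (tens Y)).
Proof.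
have L := lin_comp qB_lin betabar_lin.
rewrite /tens (lin_sum L); apply: eq_bigr => ij _.
by rewrite (linZ L) /= betabarE.
Qed.

Lemma bform_lin : linear bform.
Proof. by move=> r Y Y'; rewrite !bformE (lin_comp (lin_comp tens_lin qB_lin) betabar_lin). Qed.

Lemma bform_rel g : bform (ibf_rel g) = 0.
Proof. by rewrite bformE qB_tens_rel (lin0 betabar_lin). Qed.

Lemma bform_outer u v : bform (outer u v) = beta (pr u) (pr v).
Proof. by rewrite bformE tens_outer betabarE. Qed.

Definition mapS (Y : {ffun Pairs -> R^o}) : {ffun Pairs -> S^o} := [ffun ij => phi (Y ij)].

Lemma mapS_lin : linear (mapS : {ffun Pairs -> R^o} -> restr phi {ffun Pairs -> S^o}).
Proof.
move=> r Y Y'; apply/ffunP => ij.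
by rewrite restr_scaleE !ffunE scale_regularE /= scale_regularE rmorphD rmorphM.
Qed.

Definition relS (X : {ffun RelIdx -> S^o}) : {ffun Pairs -> S^o} :=
  \sum_g X g *: mapS (ibf_rel g).

Lemma relS_lin : linear relS.
Proof.
move=> r X X'; rewrite /relS scaler_sumr -big_split; apply: eq_bigr => g _.
by rewrite !ffunE scale_regularE scalerDl scalerA.
Qed.

Lemma relS_image_comb r Y Y' : (exists X, relS X = Y) -> (exists X, relS X = Y') ->
  exists X, relS X = r *: Y + Y'.
Proof. by move=> [X <-] [X' <-]; exists (r *: X + X'); rewrite relS_lin. Qed.

Definition relS_image : submod {ffun Pairs -> S^o} :=
  Submod (ex_intro (fun X => relS X = 0) 0 (lin0 relS_lin)) relS_image_comb.

Local Notation Q := (quot relS_image).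
Local Notation qpi := (quotpi relS_image).

Lemma qpi_rel g : qpi (mapS (ibf_rel g)) = 0.
Proof.
apply/quotpi_eq0; exists [ffun h => (g == h)%:R].
rewrite /relS (bigD1 g) //= big1 ?addr0; first by rewrite ffunE eqxx scale1r.
by move=> h /negbTE; rewrite ffunE eq_sym => ->; rewrite scale0r.
Qed.

Definition omega_row (u v : 'rV[R]_n) : restr phi Q := qpi (mapS (outer u v)).

Lemma omega_row_bilin : bilin omega_row.
Proof.
have L := lin_comp mapS_lin (lin_restr (quotpi_lin relS_image)).
by split=> [u|v]; apply: lin_comp L; [exact: outer_bilin.1 | exact: outer_bilin.2].
Qed.

Lemma omega_row_kerl u v : pr u = 0 -> omega_row u v = 0.
Proof.
move/pr_ker; apply: (span_ind (omega_row_bilin.2 v)) => _ [i ->]; move: v.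
apply: (row_generates (omega_row_bilin.1 _)) => _ [j ->].
exact: (qpi_rel (inl (inl (i, j)))).
Qed.

Lemma omega_row_kerr u v : pr v = 0 -> omega_row u v = 0.
Proof.
move/pr_ker; apply: (span_ind (omega_row_bilin.1 u)) => _ [i ->]; move: u.
apply: (row_generates (omega_row_bilin.2 _)) => _ [j ->].
exact: (qpi_rel (inl (inr (j, i)))).
Qed.

Definition omega (a b : B) : restr phi Q := omega_row (lift_row a) (lift_row b).

Lemma omega_pr u v : omega (pr u) (pr v) = omega_row u v.
Proof.
have [L1 L2] := omega_row_bilin.
apply/eqP; rewrite -subr_eq0 -[omega _ _](subrK (omega_row u (lift_row (pr v)))).
rewrite -addrA -(linB (L2 _)) -(linB (L1 _)) omega_row_kerl ?omega_row_kerr ?addr0 //.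
  by rewrite (linB pr_lin) lift_rowK subrr.
by rewrite (linB pr_lin) lift_rowK subrr.
Qed.

Lemma omega_bilin : bilin omega.
Proof.
have [L1 L2] := omega_row_bilin.
split=> [a|b] r x y; rewrite -[x]lift_rowK -[y]lift_rowK.
  by rewrite -(lift_rowK a) -pr_lin !omega_pr L1.
by rewrite -(lift_rowK b) -pr_lin !omega_pr L2.
Qed.

Lemma omega_ibf_inv : ibf_inv mulB omega.
Proof.
have mulE i j : mulB (bgen i) (bgen j) = pr (mult_row i j) by rewrite lift_rowK.
have relE g u v u' v' :
    ibf_rel g = outer u v - outer u' v' -> omega_row u v = omega_row u' v'.
  move=> gE; apply/eqP; rewrite -subr_eq0 /omega_row.
  by rewrite -(linB (quotpi_lin relS_image)) -(linB mapS_lin) -gE qpi_rel.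
apply: (ibf_inv_generated bgen_generates mulB_bil omega_bilin).
move=> _ _ _ [i ->] [j ->] [l ->]; rewrite !mulE /bgen !omega_pr.
by split; [apply: (relE (inr (inl (i, j, l)))) | apply: (relE (inr (inr (i, j, l))))].
Qed.

Local Notation omegaS := (omS tauP omega_bilin).

(* [omegaTT] maps IBF_S(B (x)_R S) onto [Q] compatibly with the forms, so when
   [betaSbar] is injective the kernel of [bformS] is exactly the image of [relS]. *)
Definition omegaTT : TTT -> Q := sval (tensor_lift qTP.1 (omS_bilin tauP tau_scale omega_bilin)).

Lemma omegaTT_lin : linear omegaTT.
Proof. exact: (svalP (tensor_lift qTP.1 (omS_bilin tauP tau_scale omega_bilin))).1. Qed.

Lemma omegaTT_tt x y : omegaTT (ttT x y) = omegaS x y.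
Proof. exact: (svalP (tensor_lift qTP.1 (omS_bilin tauP tau_scale omega_bilin))).2. Qed.

Lemma omegaTT_ker z : qT z = 0 -> omegaTT z = 0.
Proof.
have omS_inv := omS_ibf_inv tauP tau_scale omega_bilin mulT_bil mulT_tau omega_ibf_inv.
move/qTP.2.2.2; apply: (span_ind omegaTT_lin) => _ [x [y [w [->|->]]]].
all: have [E1 E2] := omS_inv x y w; rewrite (linB omegaTT_lin) !omegaTT_tt.
  by rewrite E1 subrr.
by rewrite E2 subrr.
Qed.

Definition bformS (Y : {ffun Pairs -> S^o}) : S^o :=
  \sum_ij Y ij * phi (beta (bgen ij.1) (bgen ij.2)).

Lemma bformS_lin : linear bformS.
Proof.
move=> r Y Y'; rewrite /bformS scaler_sumr -big_split; apply: eq_bigr => ij _.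
by rewrite !ffunE !scale_regularE mulrDl mulrA.
Qed.

Lemma bformS_mapS Y : bformS (mapS Y) = phi (bform Y).
Proof. by rewrite /bformS rmorph_sum; apply: eq_bigr => ij _; rewrite ffunE rmorphM. Qed.

Lemma bformS_relS X : bformS (relS X) = 0.
Proof.
rewrite /relS (lin_sum bformS_lin) big1 // => g _.
by rewrite (linZ bformS_lin) bformS_mapS bform_rel rmorph0 scaler0.
Qed.

Definition bformQ (q : Q) : S^o := bformS (quot_repr q).

Lemma bformQ_qpi Y : bformQ (qpi Y) = bformS Y.
Proof.
apply/eqP; rewrite -subr_eq0 -(linB bformS_lin); apply/eqP.
by have [X <-] := quot_reprP relS_image Y; rewrite bformS_relS.
Qed.

Lemma bformQ_lin : linear bformQ.
Proof.
move=> r q q'; rewrite -(quot_reprK q) -(quot_reprK q').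
by rewrite -quotpi_lin !bformQ_qpi bformS_lin.
Qed.

Lemma bformQ_omegaTT z : bformQ (omegaTT z) = betaSbar (qT z).
Proof.
have [oS1 oS2] := bilin_restr phi (omS_bilin tauP tau_scale omega_bilin).
have [bS1 bS2] := bilin_restr phi betaS_bil.
have bQ_lin := lin_restr (phi := phi) bformQ_lin.
move: z; apply: (tensor_ext qTP.1 (lin_comp omegaTT_lin bformQ_lin)).
  exact: lin_comp qT_lin betaSbar_lin.
move=> x y; rewrite omegaTT_tt betaSbarE; move: x y.
apply: (generates_ext2 (tensor_generates tauP) (V := restr phi S^o)).
- by split=> [x|y]; apply: lin_comp bQ_lin; [exact: oS1|exact: oS2].
- by split; [exact: bS1|exact: bS2].
move=> _ _ [a [s ->]] [b [s' ->]].
rewrite omS_tau2 !(linZ bformQ_lin) /omega /omega_row bformQ_qpi bformS_mapS.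
by rewrite bform_outer !lift_rowK betaS_tau !scale_regularE mulrA mulrC mulrA.
Qed.

Definition tensS (Y : {ffun Pairs -> S^o}) : TTT :=
  \sum_ij Y ij *: ttT (tau (bgen ij.1) 1) (tau (bgen ij.2) 1).

Lemma mapS_outer_delta i j :
  mapS (outer (delta_mx 0 i) (delta_mx 0 j)) = ffun_delta S (i, j).
Proof.
apply/ffunP => [[k l]]; rewrite !ffunE /= !mxE /= -natrM rmorph_nat -mulnb.
by rewrite [k == i]eq_sym [l == j]eq_sym.
Qed.

Lemma omegaTT_tensS Y : omegaTT (tensS Y) = qpi Y.
Proof.
rewrite /tensS (lin_sum omegaTT_lin) -{2}(ffun_delta_sum Y) (lin_sum (quotpi_lin _)).
apply: eq_bigr => ij _; rewrite (linZ omegaTT_lin) (linZ (quotpi_lin _)) omegaTT_tt.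
by rewrite omS_tau2 !scale1r omega_pr /omega_row mapS_outer_delta; case: ij.
Qed.

(* The base ring is viewed as the free module [{ffun unit -> _}], so that
   [ffun_tensor] describes its base change. *)
Definition bformS1 (Y : {ffun Pairs -> S^o}) : {ffun unit -> S^o} := [ffun _ => bformS Y].

Lemma bformS1_lin : linear bformS1.
Proof. by move=> r Y Y'; apply/ffunP => u; rewrite !ffunE bformS_lin. Qed.

Lemma relS_exact : injective betaSbar ->
  @exact_at R (restr phi {ffun RelIdx -> S^o}) (restr phi {ffun Pairs -> S^o})
    (restr phi {ffun unit -> S^o}) relS bformS1.
Proof.
move=> bS_inj Y; split=> [/ffunP/(_ tt)|[X <-]]; last first.
  by apply/ffunP => u; rewrite !ffunE bformS_relS.
rewrite !ffunE => bY0; apply/(quotpi_eq0 relS_image); rewrite -omegaTT_tensS.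
apply/omegaTT_ker/bS_inj.
by rewrite (lin0 betaSbar_lin) -bformQ_omegaTT omegaTT_tensS bformQ_qpi.
Qed.

Lemma bformS1_surj : (forall s, exists q, betaSbar q = s) ->
  @exact_at R (restr phi {ffun Pairs -> S^o}) (restr phi {ffun unit -> S^o})
    (restr phi {ffun unit -> S^o}) bformS1 (fun _ => 0).
Proof.
move=> bS_surj y; split=> // _.
have [q qE] := bS_surj (y tt); have [w wE] := qTP.2.2.1 q.
exists (quot_repr (omegaTT w)); apply/ffunP => -[].
by rewrite ffunE -[bformS _]/(bformQ _) bformQ_omegaTT wE qE.
Qed.

Definition relR (X : {ffun RelIdx -> R^o}) : {ffun Pairs -> R^o} := \sum_g X g *: ibf_rel g.

Lemma relR_lin : linear relR.
Proof.
move=> r X X'; rewrite /relR scaler_sumr -big_split; apply: eq_bigr => g _.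
by rewrite !ffunE scale_regularE scalerDl scalerA.
Qed.

Lemma qB_tens_relR X : qB (tens (relR X)) = 0.
Proof.
have L := lin_comp tens_lin qB_lin.
by rewrite (lin_sum L) big1 // => g _; rewrite (linZ L) /= qB_tens_rel scaler0.
Qed.

Definition bform1 (Y : {ffun Pairs -> R^o}) : {ffun unit -> R^o} := [ffun _ => bform Y].

Lemma bform1_lin : linear bform1.
Proof. by move=> r Y Y'; apply/ffunP => u; rewrite !ffunE bform_lin. Qed.

Lemma relS_tens s X : relS (ffun_tens (phi := phi) s X) = ffun_tens (phi := phi) s (relR X).
Proof.
apply/ffunP => ij; rewrite /relS /relR !ffunE !sum_ffunE rmorph_sum mulr_sumr.
by apply: eq_bigr => g _; rewrite !ffunE !scale_regularE rmorphM mulrA.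
Qed.

Lemma bformS1_tens s Y : bformS1 (ffun_tens (phi := phi) s Y) = ffun_tens (phi := phi) s (bform1 Y).
Proof.
apply/ffunP => u; rewrite /bformS1 /bform1 /bformS /bform !ffunE rmorph_sum mulr_sumr.
by apply: eq_bigr => ij _; rewrite !ffunE !rmorphM mulrA.
Qed.

Hypothesis S_ff : faithfully_flat (restr phi S^o).

Lemma relR_exact : injective betaSbar -> exact_at relR bform1.
Proof.
move=> bS_inj; apply: (S_ff relR_lin bform1_lin (ffun_tensor phi _) (ffun_tensor phi _)
  (ffun_tensor phi _) (lin_restr relS_lin) (lin_restr bformS1_lin) relS_tens bformS1_tens).2.
exact: relS_exact.
Qed.

Lemma bform_surj : (forall s, exists q, betaSbar q = s) -> exists Y, bform Y = 1.
Proof.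
move=> bS_surj.
have zero_tens (s : restr phi S^o) (y : {ffun unit -> R^o}) :
    0 = ffun_tens s (0 : {ffun unit -> R^o}).
  by apply/ffunP => u; rewrite !ffunE rmorph0 mulr0.
have := (S_ff bform1_lin (@lin_zero _ _ _) (ffun_tensor phi _) (ffun_tensor phi _)
  (ffun_tensor phi _) (lin_restr bformS1_lin) (@lin_zero _ _ _) bformS1_tens zero_tens).2.
move=> /(_ (bformS1_surj bS_surj) [ffun _ => 1]) [/(_ erefl) [Y /ffunP /(_ tt) Y1] _].
by exists Y; rewrite !ffunE in Y1.
Qed.

Lemma ibf_principle_descent : bijective betaSbar -> bijective betabar.
Proof.
move=> bS_bij; have bS_inj := bij_inj bS_bij.
have bS_surj s : exists q, betaSbar q = s by case: bS_bij => g _ gK; exists (g s).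
have [Y0 Y0_1] := bform_surj bS_surj.
apply: (form_bijective betabar_lin (e := qB (tens Y0))) => [|u]; first by rewrite -bformE.
have [y <-] := qBP.2.2.1 u.
move: y; apply: (tensor_ext qBP.1 qB_lin (lin_scalev _ (lin_comp qB_lin betabar_lin))).
move=> a b; rewrite betabarE.
pose Y := outer (lift_row a) (lift_row b) - beta a b *: Y0.
have [X XE] : exists X, relR X = Y.
  apply/(relR_exact bS_inj)/ffunP => -[]; rewrite !ffunE (linB bform_lin) (linZ bform_lin).
  by rewrite bform_outer !lift_rowK Y0_1 scale_regularE mulr1 subrr.
have L := lin_comp tens_lin qB_lin.
have := qB_tens_relR X; rewrite XE (linB L) (linZ L) /=.
by rewrite tens_outer !lift_rowK => /eqP; rewrite subr_eq0 => /eqP.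
Qed.

End Descent.
End BaseChange.

Theorem lemma4p6
  (R : comPzRingType) (B : lmodType R) (mulB : B -> B -> B)
  (HmulB : bilin mulB)
  (beta : B -> B -> R^o) (Hbeta : is_IBF_form mulB beta)
  (S : comPzRingType) (phi : {rmorphism R -> S})
  (* IBF_R(B) = (QB, qB) with (TTB, ttB) = B (x)_R B, and beta-bar *)
  (TTB : lmodType R) (ttB : B -> B -> TTB) (QB : lmodType R) (qB : TTB -> QB)
  (HQB : is_IBF_quot mulB ttB qB)
  (betabar : QB -> R^o) (Hbetabar_lin : linear betabar)
  (Hbetabar : forall a b, betabar (qB (ttB a b)) = beta a b)
  (* B (x)_R S = (T, tau), an S-module *)
  (T : lmodType S) (tau : B -> restr phi S^o -> restr phi T)
  (Htau : is_tensor_product tau)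
  (HtauS : forall (s : S) b (s' : S), s *: (tau b s' : T) = tau b (s * s'))
  (mulT : T -> T -> T) (HmulT_bil : bilin mulT)
  (HmulT : forall a (s : S) b (s' : S),
     mulT (tau a s) (tau b s') = tau (mulB a b) (s * s'))
  (betaS : T -> T -> S^o) (HbetaS_bil : bilin betaS)
  (HbetaS : forall a (s : S) b (s' : S),
     betaS (tau a s) (tau b s') = phi (beta a b) * s * s')
  (* IBF_S(B (x)_R S) = (QT, qT) with (TTT, ttT) = T (x)_S T, and betaS-bar *)
  (TTT : lmodType S) (ttT : T -> T -> TTT) (QT : lmodType S) (qT : TTT -> QT)
  (HQT : is_IBF_quot mulT ttT qT)
  (betaSbar : QT -> S^o) (HbetaSbar_lin : linear betaSbar)
  (HbetaSbar : forall x y, betaSbar (qT (ttT x y)) = betaS x y) :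
  (forall (P : lmodType R) (pi : QB -> restr phi S^o -> P),
     is_tensor_product pi ->
   forall (betabar_S : P -> restr phi S^o), linear betabar_S ->
     (forall x (s : S), betabar_S (pi x s) = betabar x *: (s : restr phi S^o)) ->
   forall (nu : P -> restr phi QT), linear nu ->
     (forall b1 b2 (s : S), nu (pi (qB (ttB b1 b2)) s)
                           = s *: (qT (ttT (tau b1 1) (tau b2 1)) : QT)) ->
   forall p : P, (betabar_S p : S) = (betaSbar (nu p) : S))
  /\
  (fin_pres B -> flat (restr phi S^o) ->
     bijective betabar -> bijective betaSbar)
  /\
  (fin_pres B -> faithfully_flat (restr phi S^o) ->
     bijective betaSbar -> bijective betabar).
Proof.
split; first exact: (base_change_betabar HQB Hbetabar HbetaS HbetaSbar_lin HbetaSbar).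
split=> [_ _|[n [pr [pr_lin [pr_surj [m [pr_rel pr_ker]]]]]] S_ff].
  exact: (ibf_principle_base_change HQB Hbetabar_lin Hbetabar Htau HtauS HmulT
            HbetaS_bil HbetaS HQT HbetaSbar_lin HbetaSbar).
exact: (ibf_principle_descent HmulB HQB Hbetabar_lin Hbetabar Htau HtauS HmulT_bil HmulT
          HbetaS_bil HbetaS HQT HbetaSbar_lin HbetaSbar pr_lin pr_surj pr_ker S_ff).
Qed.
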